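(* Let $A\in\{\mathbb Z,\mathbb R\}$ and let $K,X\subset\mathbb R^d$ be $d$-dimensional convex bodies with $\mathrm{width}(K)=\mathrm{Flt}_d^A(X)$. Then $K$ contains an $A$-unimodular copy of $X$.
   Context: A convex body is a nonempty compact convex subset of $\mathbb R^d$. An $A$-unimodular transformation is a map $T(x)=Mx+b$ with $M\in \mathrm{GL}_d(\mathbb Z)$ and $b\in A^d$; an $A$-unimodular copy of $X$ is $T(X)$ for such a $T$. For $u\in(\mathbb Z^d)^*$, $\mathrm{width}_u(K)=\sup_{x,y\in K}|u(x)-u(y)|$ and $\mathrm{width}(K)=\inf_{u\in(\mathbb Z^d)^*\setminus\{0\}}\mathrm{width}_u(K)$. $\mathrm{Flt}_d^A(X)=\sup\{\mathrm{width}(K'): K'\subset\mathbb R^d \text{ a convex body containing no } A\text{-unimodular copy of } X\}$. *)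

From HB Require Import structures.
From mathcomp Require Import all_boot all_order all_algebra.
From mathcomp Require Import all_classical all_reals all_analysis.
From mathcomp Require Import Rstruct Rstruct_topology.
Set Implicit Arguments. Unset Strict Implicit. Unset Printing Implicit Defensive.
Import Order.TTheory GRing.Theory Num.Theory.
Import numFieldNormedType.Exports.
Local Open Scope classical_set_scope.
Local Open Scope ring_scope.

Notation Rr := Rdefinitions.R.

Inductive coeffA := AZ | AR.

Definition inA (A : coeffA) (x : Rr) : Prop :=
  match A with AZ => x \is a Num.int | AR => True end.

Definition convex_setR (d : nat) (K : set 'rV[Rr]_d) : Prop :=
  forall x y t, K x -> K y -> 0 <= t <= 1 -> K ((1 - t) *: x + t *: y).

Definition convex_body (d : nat) (K : set 'rV[Rr]_d) : Prop :=
  K !=set0 /\ compact K /\ convex_setR K.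

Definition lin (d : nat) (c x : 'rV[Rr]_d) : Rr := \sum_(i < d) c 0 i * x 0 i.

(* d-dimensional: the affine hull of K is all of R^d, i.e. K lies in no
   affine hyperplane {x | c.x = const} with c <> 0. *)
Definition full_dim (d : nat) (K : set 'rV[Rr]_d) : Prop :=
  forall c : 'rV[Rr]_d, c != 0 -> exists x y, K x /\ K y /\ lin c x != lin c y.

Definition ilin (d : nat) (u : 'rV[int]_d) (x : 'rV[Rr]_d) : Rr :=
  \sum_(i < d) (u 0 i)%:~R * x 0 i.

Definition width_u (d : nat) (u : 'rV[int]_d) (K : set 'rV[Rr]_d) : \bar Rr :=
  ereal_sup [set (`|ilin u x - ilin u y|)%:E | x in K & y in K].

Definition width (d : nat) (K : set 'rV[Rr]_d) : \bar Rr :=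
  ereal_inf [set width_u u K | u in [set u : 'rV[int]_d | u != 0]].

(* A-unimodular transformation T(x) = x M + b, M ∈ GL_d(Z), b ∈ A^d
   (row-vector convention; M ranges over all of GL_d(Z) either way). *)
Definition unimod_map (d : nat) (M : 'M[int]_d) (b : 'rV[Rr]_d) (x : 'rV[Rr]_d)
  : 'rV[Rr]_d := x *m map_mx intr M + b.

Definition is_A_unimod (A : coeffA) (d : nat) (M : 'M[int]_d) (b : 'rV[Rr]_d) : Prop :=
  M \in unitmx /\ forall i, inA A (b 0 i).

Definition contains_copy (A : coeffA) (d : nat) (K X : set 'rV[Rr]_d) : Prop :=
  exists M b, is_A_unimod A M b /\ (unimod_map M b @` X) `<=` K.

Definition Flt (A : coeffA) (d : nat) (X : set 'rV[Rr]_d) : \bar Rr :=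
  ereal_sup [set width K' | K' in
     [set K' : set 'rV[Rr]_d | convex_body K' /\ ~ contains_copy A K' X]].

(* Suppose K contains no A-unimodular copy of X. Since X is full-dimensional,
   only finitely many integer matrices M map X into a given bounded set by some
   translation, so only finitely many M are relevant for the 1-neighbourhood of
   K. For each of them, the admissible translations b ∈ A^d with XM + b inside
   the e-neighbourhood K_e of K form a decreasing family of compact sets whose
   intersection is empty, hence already K_e contains no copy of X with that M
   for some e > 0. Taking the least such e, K_e is a convex body without copies
   of X, so width(K_e) <= Flt(X) = width(K); but thickening by e increases
   every lattice width by at least 2e, a contradiction. *)

From HB Require Import structures.
From mathcomp Require Import all_boot all_order all_algebra.
From mathcomp Require Import all_classical all_reals all_analysis.
From mathcomp Require Import Rstruct Rstruct_topology.
From mathcomp Require Import zify lra finmap.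
Set Implicit Arguments. Unset Strict Implicit. Unset Printing Implicit Defensive.
Import Order.TTheory GRing.Theory Num.Theory.
Import numFieldNormedType.Exports.
Local Open Scope classical_set_scope.
Local Open Scope ring_scope.

Lemma closed_int : closed [set x : Rr | x \is a Num.int].
Proof.
move=> p clp /=; apply/negPn/negP => pZ.
set n := Num.floor p.
have /andP[lt_np lt_pn1] : n%:~R < p < (n + 1)%:~R.
  have /andP[le_np ->] := floor_itv p; rewrite andbT lt_neqAle le_np andbT.
  by apply: contra pZ => /eqP <-; rewrite rpred_int.
have : nbhs p `]n%:~R, (n + 1)%:~R[%classic.
  apply: open_nbhs_nbhs; split; first exact: interval_open.
  by rewrite /= in_itv /= lt_np lt_pn1.
move=> /clp [_ [/= /intrP[m ->]]]; rewrite /= in_itv /= !ltr_int; lia.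
Qed.

Lemma closed_inA_vec A d : closed [set b : 'rV[Rr]_d | forall i, inA A (b 0 i)].
Proof.
have -> : [set b : 'rV[Rr]_d | forall i, inA A (b 0 i)] =
    \bigcap_(i in setT) ((fun b : 'rV[Rr]_d => b 0 i) @^-1` [set r | inA A r]).
  by apply/seteqP; split => b /= hb i //=; apply: (hb i).
apply: closed_bigI => i _; apply: preimage_closed.
  by move=> z _; exact: coord_continuous.
case: A => /=; first exact: closed_int.
by rewrite [X in closed X](_ : _ = setT) //; apply/seteqP; split.
Qed.

Lemma seq_pos_lb (s : seq Rr) : (forall x, x \in s -> 0 < x) ->
  exists2 m, 0 < m & forall x, x \in s -> m <= x.
Proof.
elim: s => [|a s IHs] s_gt0; first by exists 1.
have [m m_gt0 hm] : exists2 m, 0 < m & forall x, x \in s -> m <= x.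
  by apply: IHs => x xs; apply: s_gt0; rewrite inE xs orbT.
exists (Num.min a m); first by rewrite lt_min m_gt0 s_gt0 ?mem_head.
by move=> x; rewrite inE => /predU1P[->|xs]; rewrite ge_min ?lexx // hm ?orbT.
Qed.

Lemma fin_uniform_pos (T : finType) (Q : T -> Rr -> Prop) :
  (forall t e e', 0 < e' -> e' <= e -> Q t e -> Q t e') ->
  (forall t, exists2 e, 0 < e & Q t e) ->
  exists2 e, 0 < e & forall t, Q t e.
Proof.
move=> Q_mono Q_pos.
have [f f_pos] : {f : T -> Rr & forall t, 0 < f t /\ Q t (f t)}.
  apply: (@choice _ _ (fun t e => 0 < e /\ Q t e)) => t.
  by have [e e0 Qe] := Q_pos t; exists e.
have [m m_gt0 hm] : exists2 m, 0 < m & forall x, x \in [seq f t | t <- enum T] -> m <= x.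
  by apply: seq_pos_lb => _ /mapP[t _ ->]; case: (f_pos t).
exists m => // t; have [ft0 Qft] := f_pos t; apply: Q_mono Qft => //.
by apply: hm; apply: map_f; rewrite mem_enum.
Qed.

Section Thicken.
Variable d : nat.
Implicit Types (K : set 'rV[Rr]_d) (e : Rr).

Definition thicken K e : set 'rV[Rr]_d := [set y | exists2 k, K k & `|k - y| <= e].

Lemma sub_thicken K e : 0 <= e -> K `<=` thicken K e.
Proof. by move=> e0 x Kx; exists x => //; rewrite subrr normr0. Qed.

Lemma le_thicken K e e' : e <= e' -> thicken K e `<=` thicken K e'.
Proof. by move=> lee y [k Kk hk]; exists k => //; apply: le_trans lee. Qed.

Lemma norm_thicken K e r y : (forall x, K x -> `|x| < r) ->
  thicken K e y -> `|y| <= r + e.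
Proof.
move=> hr [k Kk hk]; have := ler_normB k (k - y); rewrite opprB addrC subrK.
by have := hr _ Kk; move: hk; lra.
Qed.

Lemma compact_thicken K e : 0 <= e -> compact K -> compact (thicken K e).
Proof.
move=> e0 cK; set B := closed_ball_ Num.norm (0 : 'rV[Rr]_d) e.
have cB : compact B.
  apply: bounded_closed_compact; last exact: closed_closed_ball_.
  exists e; split; first by rewrite num_real.
  by move=> r er x; rewrite /B /closed_ball_ /= sub0r normrN => /le_lt_trans/(_ er)/ltW.
have -> : thicken K e = (fun z => z.1 + z.2) @` (K `*` B).
  rewrite /B /closed_ball_; apply/seteqP; split.
  - move=> y [k Kk hk]; exists (k, y - k); last by rewrite /= addrC subrK.
    by split => //=; rewrite sub0r normrN -normrN opprB.
  - move=> _ [[k v] [/= Kk hv] <-]; exists k => //=.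
    by rewrite opprD addrA subrr sub0r normrN; move: hv; rewrite sub0r normrN.
apply: continuous_compact; last exact: compact_setX.
by apply: continuous_subspaceT; exact: add_continuous.
Qed.

Lemma convex_thicken K e : 0 <= e -> convex_setR K -> convex_setR (thicken K e).
Proof.
move=> e0 cvK x y t [k Kk hk] [l Kl hl] /andP[t0 t1].
exists ((1 - t) *: k + t *: l); first by apply: cvK => //; rewrite t0 t1.
rewrite opprD addrACA -!scalerBr; apply: le_trans (ler_normD _ _) _.
rewrite !normrZ (ger0_norm t0) ger0_norm ?subr_ge0 //.
have -> : e = (1 - t) * e + t * e by rewrite -mulrDl subrK mul1r.
by apply: lerD; apply: ler_wpM2l; rewrite ?subr_ge0.
Qed.

Lemma convex_body_thicken K e : 0 <= e -> convex_body K -> convex_body (thicken K e).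
Proof.
move=> e0 [[x Kx] [cK cvK]]; split; first by exists x; apply: sub_thicken.
by split; [exact: compact_thicken | exact: convex_thicken].
Qed.

Lemma closed_mem_thicken K y : closed K ->
  (forall e, 0 < e -> e <= 1 -> thicken K e y) -> K y.
Proof.
move=> cK hK; apply: cK => B /nbhs_ballP [e e0 eB].
have e'0 : 0 < Num.min (e / 2) 1 by rewrite lt_min ltr01 andbT divr_gt0.
have [k Kk hk] := hK _ e'0 ltac:(by rewrite ge_min lexx orbT).
exists k; split => //; apply: eB; rewrite -ball_normE /= distrC.
apply: le_lt_trans hk _; rewrite gt_min ltr_pdivrMr // ltr_pMr // ltr1n //.
Qed.

End Thicken.

Lemma ilinD d (u : 'rV[int]_d) x y : ilin u (x + y) = ilin u x + ilin u y.
Proof. by rewrite /ilin -big_split; apply: eq_bigr => j _; rewrite mxE mulrDr. Qed.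

Lemma ilinZ_delta d (u : 'rV[int]_d) (c : Rr) i :
  ilin u (c *: delta_mx 0 i) = c * (u 0 i)%:~R.
Proof.
rewrite /ilin (bigD1 i) //= big1 => [|j ji]; last by rewrite !mxE (negPf ji) andbF !mulr0.
by rewrite !mxE !eqxx /= mulr1 addr0 mulrC.
Qed.

Lemma ilin_delta d (i : 'I_d) (x : 'rV[Rr]_d) : ilin (delta_mx 0 i) x = x 0 i.
Proof.
rewrite /ilin (bigD1 i) //= big1 => [|j ji]; last by rewrite !mxE (negPf ji) andbF mul0r.
by rewrite !mxE !eqxx /= mul1r addr0.
Qed.

Lemma mx_norm_entry {m n} (M : 'M[Rr]_(m, n)) i j : `|M i j| <= `|M|.
Proof.
rewrite [X in _ <= X]/Num.norm /= mx_normrE.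
exact: (le_bigmax _ (fun ij : 'I_m * 'I_n => `|M ij.1 ij.2|) (i, j)).
Qed.

Lemma mx_norm_delta d (i : 'I_d) : `|delta_mx 0 i : 'rV[Rr]_d| <= 1.
Proof.
rewrite [X in X <= _]/Num.norm /= mx_normrE.
by apply: bigmax_le => // -[a b] _ /=; rewrite mxE; case: (_ && _); rewrite ?normr1 ?normr0.
Qed.

(* Push x and y apart by e along a coordinate axis i with u_i <> 0: since u is
   integral, the functional gains 2e|u_i| >= 2e. *)
Lemma width_u_thicken_pair d (K : set 'rV[Rr]_d) u e x y : 0 <= e -> u != 0 ->
  K x -> K y -> ilin u y <= ilin u x ->
  ((`|ilin u x - ilin u y| + 2 * e)%:E <= width_u u (thicken K e))%E.
Proof.
move=> e0 u_neq0 Kx Ky le_yx.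
have [i ui] : exists i, u 0 i != 0.
  apply/existsP; apply: contraR u_neq0 => /existsPn ui0.
  by apply/eqP/rowP => j; rewrite mxE; apply/eqP/negPn/ui0.
set a : Rr := (u 0 i)%:~R.
have a1 : 1 <= `|a| by apply: norm_intr_ge1; [exact: rpred_int | rewrite intr_eq0].
set s := Num.sg a; set v : 'rV[Rr]_d := delta_mx 0 i.
have sa : s * a = `|a| by rewrite normrEsg.
have shift z c : K z -> `|c| = `|e * s| -> thicken K e (z + c *: v).
  move=> Kz hc; exists z => //; rewrite opprD addrA subrr sub0r normrN normrZ hc.
  rewrite normrM (ger0_norm e0) -mulrA ler_piMr // normr_sg.
  by apply: mulr_ile1 => //; [case: (a != 0) | exact: mx_norm_delta].
have Kx' := shift x (e * s) Kx erefl.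
have Ky' := shift y (- (e * s)) Ky (normrN _).
apply: le_trans (ereal_sup_ubound (ex_intro2 _ _ _ Kx' (ex_intro2 _ _ _ Ky' erefl))).
rewrite lee_fin !ilinD !ilinZ_delta -/a mulNr -!mulrA sa ger0_norm ?subr_ge0 //.
have : 0 <= 2 * e * (`|a| - 1) by apply: mulr_ge0; lra.
by move=> ?; apply: le_trans (ler_norm _); lra.
Qed.

Lemma width_u_thicken d (K : set 'rV[Rr]_d) u e : 0 <= e -> u != 0 ->
  (width_u u K + (2 * e)%:E <= width_u u (thicken K e))%E.
Proof.
move=> e0 u_neq0.
have pair x y : K x -> K y ->
    ((`|ilin u x - ilin u y| + 2 * e)%:E <= width_u u (thicken K e))%E.
  move=> Kx Ky; have /orP[le_yx|le_xy] := le_total (ilin u y) (ilin u x).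
    exact: width_u_thicken_pair.
  by rewrite distrC; exact: width_u_thicken_pair.
have : (width_u u K <= width_u u (thicken K e) - (2 * e)%:E)%E.
  apply: ge_ereal_sup => _ [x Kx [y Ky <-]].
  move: (pair x y Kx Ky); case: (width_u u (thicken K e)) => [w| |] //=.
    by rewrite !lee_fin => ?; lra.
  by move=> _; rewrite addye // leey.
by move=> /(leeD2r (2 * e)%:E) /le_trans; apply; rewrite subeK.
Qed.

Lemma width_thicken d (K : set 'rV[Rr]_d) e : 0 <= e ->
  (width K + (2 * e)%:E <= width (thicken K e))%E.
Proof.
move=> e0; apply: le_ereal_inf_tmp => _ [u /= u_neq0 <-].
apply: le_trans (width_u_thicken K e0 u_neq0); apply: leeD2r.
by apply: ereal_inf_lbound; exists u.
Qed.

Lemma fin_num_width d (K : set 'rV[Rr]_d.+1) : compact K -> K !=set0 ->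
  width K \is a fin_num.
Proof.
move=> /compact_bounded /ex_strict_bound_gt0 [r _ hr] [k Kk].
have u_neq0 : delta_mx 0 0 != 0 :> 'rV[int]_d.+1.
  by apply/eqP => /matrixP /(_ 0 0); rewrite !mxE !eqxx.
rewrite ge0_fin_numE; last first.
  apply: le_ereal_inf_tmp => _ [u _ <-].
  apply: le_trans (ereal_sup_ubound _); last by exists k => //; exists k.
  by rewrite subrr normr0.
apply: (le_lt_trans _ (ltry (2 * r))).
apply: (@le_trans _ _ (width_u (delta_mx 0 0) K)).
  by apply: ereal_inf_lbound; exists (delta_mx 0 0).
apply: ge_ereal_sup => _ [x Kx [y Ky <-]]; rewrite !ilin_delta lee_fin.
apply: le_trans (ler_normB _ _) _.
have := le_lt_trans (mx_norm_entry x 0 0) (hr x Kx).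
by have := le_lt_trans (mx_norm_entry y 0 0) (hr y Ky); lra.
Qed.

Lemma width_le_Flt A d (K X : set 'rV[Rr]_d) :
  convex_body K -> ~ contains_copy A K X -> (width K <= Flt A X)%E.
Proof. by move=> cbK ncK; apply: ereal_sup_ubound; exists K. Qed.

Section Translates.
Variables (A : coeffA) (d : nat) (K X : set 'rV[Rr]_d) (M : 'M[Rr]_d).
Hypothesis cK : compact K.

Definition translates (e : Rr) : set 'rV[Rr]_d :=
  [set b : 'rV[Rr]_d | (forall i, inA A (b 0 i)) /\ forall x, X x -> thicken K e (x *m M + b)].

Lemma le_translates e e' : e <= e' -> translates e `<=` translates e'.
Proof. by move=> lee b [Ab XMb]; split=> // x Xx; apply: le_thicken lee _ (XMb x Xx). Qed.

Lemma closed_translates e : 0 <= e -> closed (translates e).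
Proof.
move=> e0; apply: closedI; first exact: closed_inA_vec.
apply: closed_bigI => x _; apply: preimage_closed.
  move=> b _; exact: (continuousD (@cst_continuous _ _ (x *m M) b) (@cvg_id _ _)).
by apply: compact_closed; [exact: norm_hausdorff | exact: compact_thicken].
Qed.

Lemma compact_translates x0 : X x0 -> compact (translates 1).
Proof.
move=> Xx0; have [r _ hr] := ex_strict_bound_gt0 (compact_bounded cK).
apply: bounded_closed_compact; last exact: closed_translates.
exists (r + 1 + `|x0 *m M|); split; first by rewrite num_real.
move=> R lt_R b [_ XMb]; apply: ltW; apply: le_lt_trans lt_R.
have -> : b = (x0 *m M + b) - x0 *m M by rewrite addrAC subrr add0r.
apply: le_trans (ler_normB _ _) _; rewrite lerD2r.
exact: norm_thicken (XMb x0 Xx0).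
Qed.

Lemma thicken_no_translate : X !=set0 ->
  ~ (exists2 b : 'rV[Rr]_d, forall i, inA A (b 0 i) & forall x, X x -> K (x *m M + b)) ->
  exists2 e, 0 < e & translates e = set0.
Proof.
move=> [x0 Xx0] no_translate; apply: contrapT => all_nonempty.
have nonempty e : 0 < e -> translates e !=set0.
  by move=> e0; apply/set0P/eqP => empty_e; apply: all_nonempty; exists e.
have [b cap_b] : \bigcap_(e in [set e : Rr | 0 < e <= 1]) translates e !=set0.
  move: (compact_translates Xx0); rewrite compact_In0; apply.
  - exists translates => [e /andP[e0 _]|e /andP[_ e1]].
      exact: closed_translates (ltW e0).
    by apply/seteqP; split => [b eb|b [] //]; split=> //; exact: le_translates eb.
  - move=> D sD; have [m m0 hm] : exists2 m, 0 < m & forall e, e \in enum_fset D -> m <= e.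
      by apply: seq_pos_lb => e /sD /set_mem /andP[].
    have [b mb] := nonempty m m0.
    by exists b => e /= De; apply: le_translates (hm e De) _ mb.
apply: no_translate; exists b; first by have [] := cap_b 1 ltac:(by rewrite /= ltr01 lexx).
move=> x Xx; apply: closed_mem_thicken; first exact: compact_closed.
by move=> e e0 e1; have [_] := cap_b e ltac:(by rewrite /= e0 e1); apply.
Qed.

End Translates.

(* Integer matrices with entries in [-N, N] are enumerated by the finite type
   of matrices over 'I_(2N+1). *)
Lemma bounded_int_mx_uniform_pos d N (Q : 'M[int]_d -> Rr -> Prop) :
  (forall M e e', 0 < e' -> e' <= e -> Q M e -> Q M e') ->
  (forall M, exists2 e, 0 < e & Q M e) ->
  exists2 e, 0 < e & forall M : 'M[int]_d, (forall i j, `|M i j| <= N%:Z) -> Q M e.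
Proof.
move=> Q_mono Q_pos.
pose shift_mx (T : 'M['I_(N.*2.+1)]_d) : 'M[int]_d :=
  \matrix_(i, j) ((T i j : nat)%:Z - N%:Z).
have [e e0 Qe] := @fin_uniform_pos _ (fun T => Q (shift_mx T))
  (fun T => Q_mono (shift_mx T)) (fun T => Q_pos (shift_mx T)).
exists e => // M M_bounded.
suff -> : M = shift_mx (\matrix_(i, j) inord (absz (M i j + N%:Z))) by [].
apply/matrixP => i j; rewrite !mxE inordK; have := M_bounded i j; lia.
Qed.

Lemma lin_mx d (c x : 'rV[Rr]_d) : lin c x = (x *m c^T) 0 0.
Proof. by rewrite /lin !mxE; apply: eq_bigr => i _; rewrite !mxE mulrC. Qed.

Lemma full_dim_diff_not_submx d (X : set 'rV[Rr]_d) n (V : 'M[Rr]_(n, d)) :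
  full_dim X -> (\rank V < d)%N -> exists x y, [/\ X x, X y & ~~ (x - y <= V)%MS].
Proof.
move=> fX rV; set C := kermx V^T.
have C_neq0 : C != 0 by rewrite -mxrank_eq0 mxrank_ker mxrank_tr -lt0n subn_gt0.
have [i Ci] : exists i, row i C != 0.
  apply/existsP; apply: contraR C_neq0 => /existsPn Ci0.
  by apply/eqP/row_matrixP => i; rewrite row0; exact/eqP/negPn/Ci0.
have CV : row i C *m V^T = 0 by rewrite -row_mul mulmx_ker row0.
have [x [y [Xx [Xy]]]] := fX _ Ci; rewrite !lin_mx => lin_neq.
exists x, y; split => //; apply: contra lin_neq => /submxP [w xy].
have : (x - y) *m (row i C)^T = 0.
  by rewrite xy -mulmxA -[V]trmxK -trmx_mul CV trmx0 mulmx0.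
by rewrite mulmxBl => /eqP; rewrite subr_eq0 => /eqP ->.
Qed.

Lemma full_dim_diff_basis d (X : set 'rV[Rr]_d) : full_dim X ->
  exists n (V : 'M[Rr]_(n, d)),
    (forall i, exists x y, [/\ X x, X y & row i V = x - y]) /\ row_full V.
Proof.
move=> fX.
suff rank_ge k : (k <= d)%N -> exists n (V : 'M[Rr]_(n, d)),
    (forall i, exists x y, [/\ X x, X y & row i V = x - y]) /\ (k <= \rank V)%N.
  have [n [V [V_diff rankV]]] := rank_ge d (leqnn d).
  by exists n, V; split; rewrite // /row_full eqn_leq rank_leq_col.
elim: k => [|k IHk] lt_kd; first by exists 0%N, 0; split => // -[].
have [n [V [V_diff rankV]]] := IHk (ltnW lt_kd).
have [lt_kV|le_Vk] := ltnP k (\rank V); first by exists n, V.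
have [x [y [Xx Xy xyV]]] := full_dim_diff_not_submx fX (leq_ltn_trans le_Vk lt_kd).
exists (n + 1)%N, (col_mx V (x - y)); split.
  move=> i; rewrite -(splitK i); case: (fintype.split i) => j /=.
    by rewrite rowKu; exact: V_diff.
  by rewrite rowKd row_id; exists x, y.
have ltV : (V < col_mx V (x - y))%MS.
  by rewrite ltmxE -!addsmxE addsmxSl /= addsmx_sub submx_refl.
by have := rank_ltmx ltV; rewrite (@anti_leq (\rank V) k) ?rankV ?le_Vk.
Qed.

(* With W V = 1 for a matrix V of differences of points of X, M = W (V M) and
   the entries of V M are differences of points of the copy XM + b. *)
Lemma copy_entries_bounded d (X : set 'rV[Rr]_d) (R : Rr) : full_dim X ->
  exists N : nat, forall (M : 'M[int]_d) (b : 'rV[Rr]_d),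
    (forall x, X x -> `|x *m map_mx intr M + b| <= R) ->
    forall i j, `|M i j| <= N%:Z.
Proof.
move=> fX; have [n [V [V_diff /row_fullP [W WV]]]] := full_dim_diff_basis fX.
set C := \sum_i \sum_k `|W i k| * (2 * R).
exists (Num.truncn C).+1 => M b copy_bounded i j.
set MR := map_mx intr M : 'M[Rr]_d.
have VM_bounded k l : `|(V *m MR) k l| <= 2 * R.
  have [x [y [Xx Xy Vk]]] := V_diff k.
  have -> : (V *m MR) k l = ((x *m MR + b) - (y *m MR + b)) 0 l.
    by rewrite opprD addrACA subrr addr0 -mulmxBl -Vk -row_mul !mxE.
  apply: le_trans (mx_norm_entry _ _ _) _; apply: le_trans (ler_normB _ _) _.
  by have := copy_bounded _ Xx; have := copy_bounded _ Xy; lra.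
have MR_bounded : `|MR i j| <= C.
  rewrite -[MR]mul1mx -WV -mulmxA mxE; apply: le_trans (ler_norm_sum _ _ _) _.
  apply: (@le_trans _ _ (\sum_k `|W i k| * (2 * R))).
    by apply: ler_sum => k _; rewrite normrM ler_wpM2l.
  rewrite /C (bigD1 i) //= lerDl; apply: sumr_ge0 => i' _; apply: sumr_ge0 => k _.
  by apply: mulr_ge0 => //; apply: le_trans (VM_bounded k j); rewrite normr_ge0.
rewrite -(ler_int Rr) intr_norm; apply: le_trans (ltW (truncnS_gt C)).
by move: MR_bounded; rewrite mxE.
Qed.

Lemma thicken_no_copy A d (K X : set 'rV[Rr]_d) :
  compact K -> X !=set0 -> full_dim X -> ~ contains_copy A K X ->
  exists2 e, 0 < e & ~ contains_copy A (thicken K e) X.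
Proof.
move=> cK X0 fX ncK.
have [r _ hr] := ex_strict_bound_gt0 (compact_bounded cK).
have [N M_bounded] := copy_entries_bounded (r + 1) fX.
pose Q (M : 'M[int]_d) e := M \in unitmx -> translates A K X (map_mx intr M) e = set0.
have [e e0 Qe] : exists2 e, 0 < e &
    forall M : 'M[int]_d, (forall i j, `|M i j| <= N%:Z) -> Q M e.
  apply: bounded_int_mx_uniform_pos => [M e e' _ le_e QMe uM|M].
    by rewrite -subset0 -(QMe uM); exact: le_translates.
  have [uM|/negP nuM] := boolP (M \in unitmx); last by exists 1 => // /nuM.
  have no_copyM : ~ (exists2 b : 'rV[Rr]_d,
      forall i, inA A (b 0 i) & forall x, X x -> K (x *m map_mx intr M + b)).
    move=> [b Ab XMb]; apply: ncK; exists M, b; split => // _ [x Xx <-]; exact: XMb.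
  have [e e0 emptyM] := thicken_no_translate cK X0 no_copyM.
  by exists e.
exists (Num.min e 1); first by rewrite lt_min e0 ltr01.
move=> [M [b [[uM Ab] copy]]].
have XMb x : X x -> thicken K (Num.min e 1) (x *m map_mx intr M + b).
  by move=> Xx; apply: copy; exists x.
have M_bdd : forall i j, `|M i j| <= N%:Z.
  apply: (M_bounded M b) => x Xx; apply: norm_thicken hr _.
  by apply: le_thicken (XMb x Xx); rewrite ge_min lexx orbT.
suff : translates A K X (map_mx intr M) e b by rewrite (Qe M M_bdd uM).
by split=> // x Xx; apply: le_thicken (XMb x Xx); rewrite ge_min lexx.
Qed.

Lemma contains_copy_dim0 A (K X : set 'rV[Rr]_0) : K !=set0 -> contains_copy A K X.
Proof.
move=> [k Kk]; exists 1%:M, 0; split; first by split; [exact: unitmx1 | case].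
by move=> _ [x _ <-]; rewrite (thinmx0 (x *m _ + 0)) -(thinmx0 k).
Qed.

Theorem proposition2p9 (A : coeffA) (d : nat) (K X : set 'rV[Rr]_d) :
  convex_body K -> full_dim K ->
  convex_body X -> full_dim X ->
  width K = Flt A X ->
  contains_copy A K X.
Proof.
case: d K X => [|d] K X cbK _ cbX fX wK; first exact: contains_copy_dim0 cbK.1.
have [K0 [cK _]] := cbK.
apply: contrapT => ncK; have [e e0 ncKe] := thicken_no_copy cK cbX.1 fX ncK.
have := width_le_Flt (convex_body_thicken (ltW e0) cbK) ncKe.
move=> /(le_trans (width_thicken K (ltW e0))); rewrite -wK.
by rewrite -(fineK (fin_num_width cK K0)) -EFinD lee_fin; lra.
Qed.
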